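(* Let $A$ be a cofibrant $\mathbb{Z}$-graded dg commutative algebra equipped with an augmentation over the ground field, such that $H^k(A)=0$ for $k<0$ and $H^0(A)=\Bbbk$. Then the adjunction unit $A\to\iota\tau_\sharp A$ is a quasi-isomorphism.
   Context: Field $\Bbbk$ of characteristic zero, cohomological grading. $\mathbb{Z}$-graded dg commutative algebras carry the model structure whose weak equivalences are quasi-isomorphisms and fibrations are degreewise surjections (cofibrations by left lifting). $\tau_\sharp A=A/(A^*,\delta(A^* );*<0)$ is the quotient of $A$ by the dg ideal generated by its components of negative degree, a non-negatively graded dg commutative algebra; it is left adjoint to the inclusion $\iota$ of non-negatively graded dg commutative algebras into $\mathbb{Z}$-graded ones. *)

From HB Require Import structures.
From mathcomp Require Import all_boot all_order all_algebra.
Set Implicit Arguments. Unset Strict Implicit. Unset Printing Implicit Defensive.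
Import Order.TTheory GRing.Theory Num.Theory.
Local Open Scope ring_scope.

(* A Z-graded dg commutative algebra over K, encoded by its total algebra
   A = (+)_k A^k : an algType K together with the homogeneous components
   deg k (subspaces) forming a direct sum decomposition, and a differential. *)
Section CDGA.
Variable K : fieldType.

Definition is_cdga (A : algType K) (deg : int -> pred A) (d : A -> A) : Prop :=
  [/\
      (forall k, 0 \in deg k /\
         forall (a : K) x y, x \in deg k -> y \in deg k -> a *: x + y \in deg k),
      (forall x : A, exists (s : seq int) (f : int -> A),
          (forall k, f k \in deg k) /\ x = \sum_(k <- s) f k),
      (forall (s : seq int) (f : int -> A), uniq s ->
          (forall k, f k \in deg k) -> \sum_(k <- s) f k = 0 ->
          forall k, k \in s -> f k = 0),
      [/\ (1 : A) \in deg 0,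
          (forall i j x y, x \in deg i -> y \in deg j -> x * y \in deg (i + j)) &
          (forall i j x y, x \in deg i -> y \in deg j ->
             x * y = (-1) ^+ absz (i * j) *: (y * x))] &
      [/\ (forall (a : K) x y, d (a *: x + y) = a *: d x + d y),
          (forall k x, x \in deg k -> d x \in deg (k + 1)),
          (forall x, d (d x) = 0) &
          (forall i x y, x \in deg i ->
             d (x * y) = d x * y + (-1) ^+ absz i *: (x * d y))]].

Record cdga := CDGA {
  cd_car : algType K;
  cd_deg : int -> pred cd_car;
  cd_d : cd_car -> cd_car;
  cd_ax : is_cdga cd_deg cd_d }.
Arguments cd_deg : clear implicits.
Arguments cd_d : clear implicits.

Definition is_cdga_hom (A B : cdga) (f : cd_car A -> cd_car B) : Prop :=
  [/\ (forall (a : K) x y, f (a *: x + y) = a *: f x + f y),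
      (forall x y, f (x * y) = f x * f y),
      f 1 = 1,
      (forall k x, x \in cd_deg A k -> f x \in cd_deg B k) &
      (forall x, f (cd_d A x) = cd_d B (f x))].

Record cdga_hom (A B : cdga) := CDGAHom {
  hom_fun : cd_car A -> cd_car B;
  hom_ax : is_cdga_hom hom_fun }.
Arguments hom_fun {A B}.

Definition cocycle {A : cdga} (k : int) (x : cd_car A) : Prop :=
  x \in cd_deg A k /\ cd_d A x = 0.
Definition coboundary {A : cdga} (k : int) (x : cd_car A) : Prop :=
  exists y, y \in cd_deg A (k - 1) /\ x = cd_d A y.

Definition quasi_iso (A B : cdga) (f : cdga_hom A B) : Prop :=
  forall k : int,
    (forall x, cocycle k x -> coboundary k (hom_fun f x) -> coboundary k x) /\
    (forall z, cocycle k z -> exists x y, cocycle k x /\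
        y \in cd_deg B (k - 1) /\ z = hom_fun f x + cd_d B y).

Definition fibration (A B : cdga) (f : cdga_hom A B) : Prop :=
  forall k z, z \in cd_deg B k -> exists x, x \in cd_deg A k /\ hom_fun f x = z.

Definition cofibrant (A : cdga) : Prop :=
  forall (B C : cdga) (p : cdga_hom B C) (f : cdga_hom A C),
    fibration p -> quasi_iso p ->
    exists g : cdga_hom A B, forall x, hom_fun p (hom_fun g x) = hom_fun f x.

Definition augmentation (A : cdga) (eps : cd_car A -> K) : Prop :=
  [/\ (forall (a : K) x y, eps (a *: x + y) = a * eps x + eps y),
      (forall x y, eps (x * y) = eps x * eps y),
      eps 1 = 1,
      (forall k x, k != 0 -> x \in cd_deg A k -> eps x = 0) &
      (forall x, eps (cd_d A x) = 0)].

Definition cohom_vanishes (A : cdga) (k : int) : Prop :=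
  forall x : cd_car A, cocycle k x -> coboundary k x.

Definition H0_is_ground (A : cdga) : Prop :=
  (forall a : K, coboundary 0 (a *: (1 : cd_car A)) -> a = 0) /\
  (forall x : cd_car A, cocycle 0 x -> exists (a : K) y,
       y \in cd_deg A (-1) /\ x = a *: 1 + cd_d A y).

(* The dg ideal generated by A^k and d(A^k), k < 0 (kernel of A -> tau# A) *)
Definition tau_gen {A : cdga} (g : cd_car A) : Prop :=
  exists k : int, k < 0 /\
    (g \in cd_deg A k \/ exists h, h \in cd_deg A k /\ g = cd_d A h).

Definition tau_ideal {A : cdga} (x : cd_car A) : Prop :=
  exists s : seq (cd_car A * cd_car A),
    (forall p, p \in s -> tau_gen p.2) /\ x = \sum_(p <- s) p.1 * p.2.

(* The unit A -> iota tau# A = A / tau_ideal is a quasi-isomorphism,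
   written out: H^k(A) -> H^k(A/I) is bijective for every k, where
   H^k(A/I) = {x in A^k | dx in I} / (I^k + d A^(k-1)). *)
Definition tau_unit_quasi_iso (A : cdga) : Prop :=
  forall k : int,
    (forall x : cd_car A, cocycle k x ->
       (exists y, y \in cd_deg A (k - 1) /\ tau_ideal (x - cd_d A y)) ->
       coboundary k x) /\
    (forall x, x \in cd_deg A k -> tau_ideal (cd_d A x) ->
       exists x' y, cocycle k x' /\ y \in cd_deg A (k - 1) /\
         tau_ideal (x - x' - cd_d A y)).

End CDGA.

(** Choose a complement [W] of [d(A^0)] in [A^1]. Because [H^{<0}(A) = 0] and
    [H^0(A) = K], the dg subalgebra [S = K ⊕ W ⊕ A^{>=2}] of [A] is
    quasi-isomorphic to [A] and vanishes in negative degrees. The polynomial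
    forms [A[t] ⊕ A[t] dt] with value in [S] at [t = 0] form a path object:
    evaluation at [t = 1] is onto [A], and in characteristic 0 integration in
    [t] makes it a quasi-isomorphism. Cofibrancy of [A] lifts the identity of
    [A] through it to some [g]. Evaluating [g] at [t = 0] is a dg algebra map
    [A -> S], hence kills the ideal [I] defining [tau# A], and integrating the
    [dt]-part of [g] over [[0, 1]] is a homotopy [h] with
    [x = g(x)(0) + d h(x) + h(dx)] and [h(I) ⊆ I]; these two facts give
    injectivity and surjectivity of [H(A) -> H(A / I)]. *)

From HB Require Import structures.
From mathcomp Require Import all_boot all_order all_algebra zify.
From mathcomp Require Import boolp classical_sets.
Set Implicit Arguments. Unset Strict Implicit. Unset Printing Implicit Defensive.
Import Order.TTheory GRing.Theory Num.Theory.
Local Open Scope ring_scope.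

Section KoszulSign.
Variable K : fieldType.

Definition koszul_sign (k : int) : K := (-1) ^+ absz k.

Lemma koszul_signD i j : koszul_sign (i + j) = koszul_sign i * koszul_sign j.
Proof.
have signE k : koszul_sign k = (-1) ^ k.
  by case: k => n //; rewrite /koszul_sign /exprz /= invr_sign.
by rewrite !signE exprzDr // unitrN1.
Qed.

Lemma koszul_sign_sqr i : koszul_sign i * koszul_sign i = 1.
Proof. by rewrite /koszul_sign -exprD -signr_odd oddD addbb. Qed.

Lemma koszul_signN i : koszul_sign (- i) = koszul_sign i.
Proof. by rewrite /koszul_sign abszN. Qed.

Lemma koszul_sign1 : koszul_sign 1 = -1.
Proof. by rewrite /koszul_sign expr1. Qed.

End KoszulSign.

Lemma sumr_restrict (V : nmodType) (I : eqType) (s u : seq I) (f : I -> V) :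
  uniq s -> uniq u -> {subset s <= u} ->
  \sum_(i <- u) (if i \in s then f i else 0) = \sum_(i <- s) f i.
Proof.
move=> us uu su; rewrite -big_mkcond /= -big_filter.
apply: perm_big; apply: uniq_perm; rewrite ?filter_uniq // => i.
by rewrite mem_filter; case si: (i \in s) => //=; rewrite su.
Qed.

Section GradedAlgebra.
Variables (K : fieldType) (A : cdga K).
Local Notation R := (cd_car A).
Local Notation deg := (@cd_deg _ A).
Local Notation d := (@cd_d _ A).
Local Notation sign := (@koszul_sign K).

Lemma deg0 k : (0 : R) \in deg k.
Proof. by case: (cd_ax A) => /(_ k) []. Qed.

Lemma degZD k a (x y : R) : x \in deg k -> y \in deg k -> a *: x + y \in deg k.
Proof. by case: (cd_ax A) => /(_ k) [] _ H _ _ _ _; apply: H. Qed.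

Lemma degD k (x y : R) : x \in deg k -> y \in deg k -> x + y \in deg k.
Proof. by move=> hx hy; have := degZD 1 hx hy; rewrite scale1r. Qed.

Lemma degZ k a (x : R) : x \in deg k -> a *: x \in deg k.
Proof. by move=> hx; have := degZD a hx (deg0 k); rewrite addr0. Qed.

Lemma degN k (x : R) : x \in deg k -> - x \in deg k.
Proof. by move=> hx; rewrite -scaleN1r degZ. Qed.

Lemma degB k (x y : R) : x \in deg k -> y \in deg k -> x - y \in deg k.
Proof. by move=> hx hy; rewrite degD ?degN. Qed.

Lemma deg_sum k (I : Type) (r : seq I) (P : pred I) (F : I -> R) :
  (forall i, P i -> F i \in deg k) -> \sum_(i <- r | P i) F i \in deg k.
Proof.
by move=> H; apply: (big_ind (fun z => z \in deg k)); [exact: deg0 | exact: degD |].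
Qed.

Lemma degMn k (x : R) n : x \in deg k -> x *+ n \in deg k.
Proof. by move=> hx; elim: n => [|n IH]; rewrite ?mulr0n ?deg0 // mulrS degD. Qed.

Lemma deg1 : (1 : R) \in deg 0.
Proof. by case: (cd_ax A) => _ _ _ []. Qed.

Lemma degM i j (x y : R) : x \in deg i -> y \in deg j -> x * y \in deg (i + j).
Proof. by case: (cd_ax A) => _ _ _ [_ H _] _; apply: H. Qed.

Lemma deg_mulC i j (x y : R) : x \in deg i -> y \in deg j ->
  x * y = sign (i * j) *: (y * x).
Proof. by case: (cd_ax A) => _ _ _ [_ _ H] _; apply: H. Qed.

Lemma deg_decomp (x : R) :
  exists s f, (forall k, f k \in deg k) /\ x = \sum_(k <- s) f k.
Proof. by case: (cd_ax A) => _ H _ _ _; apply: H. Qed.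

Lemma deg_direct s (f : int -> R) : uniq s -> (forall k, f k \in deg k) ->
  \sum_(k <- s) f k = 0 -> forall k, k \in s -> f k = 0.
Proof. by case: (cd_ax A) => _ _ H _ _; apply: H. Qed.

Lemma dZD a (x y : R) : d (a *: x + y) = a *: d x + d y.
Proof. by case: (cd_ax A) => _ _ _ _ [H _ _ _]; apply: H. Qed.

Lemma dD (x y : R) : d (x + y) = d x + d y.
Proof. by have := dZD 1 x y; rewrite !scale1r. Qed.

Lemma d0 : d 0 = 0.
Proof. by apply: (@addrI _ (d 0)); rewrite -dD !addr0. Qed.

Lemma dZ a (x : R) : d (a *: x) = a *: d x.
Proof. by have := dZD a x 0; rewrite !addr0 d0 addr0. Qed.

Lemma dN (x : R) : d (- x) = - d x.
Proof. by rewrite -scaleN1r dZ scaleN1r. Qed.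

Lemma dB (x y : R) : d (x - y) = d x - d y.
Proof. by rewrite dD dN. Qed.

Lemma d_sum (I : Type) (r : seq I) (P : pred I) (F : I -> R) :
  d (\sum_(i <- r | P i) F i) = \sum_(i <- r | P i) d (F i).
Proof. exact: (big_morph d dD d0). Qed.

Lemma dMn (x : R) n : d (x *+ n) = d x *+ n.
Proof. by elim: n => [|n IH]; rewrite ?mulr0n ?d0 // !mulrS dD IH. Qed.

Lemma d_deg k (x : R) : x \in deg k -> d x \in deg (k + 1).
Proof. by case: (cd_ax A) => _ _ _ _ [_ H _ _]; apply: H. Qed.

Lemma dd (x : R) : d (d x) = 0.
Proof. by case: (cd_ax A) => _ _ _ _ [_ _ H _]; apply: H. Qed.

Lemma d_leibniz i (x y : R) : x \in deg i ->
  d (x * y) = d x * y + sign i *: (x * d y).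
Proof. by case: (cd_ax A) => _ _ _ _ [_ _ _ H]; apply: H. Qed.

Lemma d1 : d 1 = 0.
Proof.
have := d_leibniz 1 deg1; rewrite !(mulr1, mul1r) /koszul_sign expr0 scale1r => h.
by apply: (@addrI _ (d 1)); rewrite addr0 -h.
Qed.

Lemma deg_decomp_uniq (x : R) : exists sf : seq int * (int -> R),
  [/\ uniq sf.1, (forall k, sf.2 k \in deg k) & x = \sum_(k <- sf.1) sf.2 k].
Proof.
have [s [f [hf ->]]] := deg_decomp x.
exists (undup s, fun k => f k *+ count_mem k s); split => /=.
- exact: undup_uniq.
- by move=> k; apply: degMn.
- rewrite -(big_undup_iterop_count +%R); apply: eq_bigr => k _.
  by rewrite Monoid.iteropE; elim: (count_mem k s) => //= n ->; rewrite mulrS.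
Qed.

Lemma deg_decomp_unique s s' (f f' : int -> R) : uniq s -> uniq s' ->
  (forall k, f k \in deg k) -> (forall k, f' k \in deg k) ->
  \sum_(k <- s) f k = \sum_(k <- s') f' k ->
  forall k, (if k \in s then f k else 0) = (if k \in s' then f' k else 0).
Proof.
move=> us us' hf hf' E k.
pose u := undup (s ++ s'); have uu : uniq u by exact: undup_uniq.
pose g k := (if k \in s then f k else 0) - (if k \in s' then f' k else 0).
have hg j : g j \in deg j by apply: degB; case: ifP => _; rewrite ?deg0.
have sg : \sum_(j <- u) g j = 0.
  rewrite sumrB !sumr_restrict // ?E ?subrr // => j hj;
  by rewrite mem_undup mem_cat hj ?orbT.
case ku : (k \in u).
  by apply/eqP; rewrite -subr_eq0; apply/eqP; exact: (deg_direct uu hg sg ku).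
by move: ku; rewrite mem_undup mem_cat => /norP [/negbTE -> /negbTE ->].
Qed.

Let hdecomp (x : R) := sval (cid (deg_decomp_uniq x)).

Definition hsupp (x : R) := (hdecomp x).1.
Definition hcomp (k : int) (x : R) : R :=
  if k \in hsupp x then (hdecomp x).2 k else 0.

Let hdecompP x : [/\ uniq (hdecomp x).1, (forall k, (hdecomp x).2 k \in deg k) &
   x = \sum_(k <- (hdecomp x).1) (hdecomp x).2 k].
Proof. exact: svalP (cid (deg_decomp_uniq x)). Qed.

Lemma hsupp_uniq x : uniq (hsupp x).
Proof. by case: (hdecompP x). Qed.

Lemma hcomp_deg k x : hcomp k x \in deg k.
Proof. by rewrite /hcomp; case: ifP => _; [case: (hdecompP x) | exact: deg0]. Qed.

Lemma hcomp_notin k x : k \notin hsupp x -> hcomp k x = 0.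
Proof. by rewrite /hcomp => /negbTE ->. Qed.

Lemma sum_hcomp x : x = \sum_(k <- hsupp x) hcomp k x.
Proof.
by case: (hdecompP x) => _ _ {1}->; apply: eq_big_seq => k hk; rewrite /hcomp hk.
Qed.

Lemma hcomp_decomp s (f : int -> R) x : uniq s -> (forall k, f k \in deg k) ->
  x = \sum_(k <- s) f k -> forall k, hcomp k x = if k \in s then f k else 0.
Proof.
move=> us hf E k; case: (hdecompP x) => u1 h2 E2.
by rewrite -(deg_decomp_unique u1 us h2 hf) -?E2.
Qed.

Lemma sum_hcomp_cover (F : int -> R -> R) u x : uniq u -> (forall k, F k 0 = 0) ->
  (forall k, k \notin u -> hcomp k x = 0) ->
  \sum_(k <- u) F k (hcomp k x) = \sum_(k <- hsupp x) F k (hcomp k x).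
Proof.
move=> uu F0 hu; pose w := undup (u ++ hsupp x); have uw : uniq w := undup_uniq _.
pose G k := F k (hcomp k x).
rewrite -(sumr_restrict G uu uw); last by move=> k hk; rewrite mem_undup mem_cat hk.
rewrite -(sumr_restrict G (hsupp_uniq x) uw); last first.
  by move=> k hk; rewrite mem_undup mem_cat hk orbT.
apply: eq_bigr => k _; rewrite /G; case: ifP => hk1; case: ifP => hk2 //.
- by rewrite hcomp_notin ?hk2 // F0.
- by rewrite hu ?hk1 // F0.
Qed.

Lemma hcomp_cover u x : uniq u -> (forall k, k \notin u -> hcomp k x = 0) ->
  x = \sum_(k <- u) hcomp k x.
Proof. by move=> uu hu; rewrite (@sum_hcomp_cover (fun _ y => y) u x uu) // -sum_hcomp. Qed.

Lemma hcomp_hom j x k : x \in deg j -> hcomp k x = if k == j then x else 0.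
Proof.
move=> hx; rewrite (@hcomp_decomp [:: j] (fun k => if k == j then x else 0) x) //.
- by rewrite inE; case: eqP.
- by move=> i; case: eqP => [->|]; rewrite ?deg0.
- by rewrite big_seq1 eqxx.
Qed.

Lemma hcomp_hom_id k x : x \in deg k -> hcomp k x = x.
Proof. by move=> hx; rewrite (hcomp_hom _ hx) eqxx. Qed.

Lemma hsupp_cover x y k : k \notin undup (hsupp x ++ hsupp y) ->
  hcomp k x = 0 /\ hcomp k y = 0.
Proof. by rewrite mem_undup mem_cat => /norP [hx hy]; rewrite !hcomp_notin. Qed.

Lemma hcompZD k a x y : hcomp k (a *: x + y) = a *: hcomp k x + hcomp k y.
Proof.
pose u := undup (hsupp x ++ hsupp y).
rewrite (@hcomp_decomp u (fun k => a *: hcomp k x + hcomp k y) (a *: x + y)) ?undup_uniq //.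
- by case: ifP => // /negbT /hsupp_cover [-> ->]; rewrite scaler0 addr0.
- by move=> i; rewrite degZD ?hcomp_deg.
- rewrite big_split /= -scaler_sumr -!hcomp_cover ?undup_uniq //;
  by move=> j /hsupp_cover [].
Qed.

Lemma hcompD k x y : hcomp k (x + y) = hcomp k x + hcomp k y.
Proof. by have := hcompZD k 1 x y; rewrite !scale1r. Qed.

Lemma hcomp0 k : hcomp k 0 = 0.
Proof. by rewrite (hcomp_hom _ (deg0 0)); case: eqP. Qed.

Lemma hcomp_sum k (I : Type) (r : seq I) (P : pred I) (F : I -> R) :
  hcomp k (\sum_(i <- r | P i) F i) = \sum_(i <- r | P i) hcomp k (F i).
Proof. exact: (big_morph (hcomp k) (hcompD k) (hcomp0 k)). Qed.

Lemma hcomp_id k j x : hcomp k (hcomp j x) = if k == j then hcomp j x else 0.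
Proof. exact: hcomp_hom (hcomp_deg j x). Qed.

Lemma hcomp_d k x : hcomp k (d x) = d (hcomp (k - 1) x).
Proof.
rewrite {1}(sum_hcomp x) d_sum hcomp_sum.
rewrite (eq_bigr (fun j => if k == j + 1 then d (hcomp j x) else 0)); last first.
  by move=> j _; rewrite (hcomp_hom _ (d_deg (hcomp_deg j x))).
case hk: (k - 1 \in hsupp x).
  rewrite (bigD1_seq (k - 1)) ?hsupp_uniq //= subrK eqxx big1 ?addr0 // => j hj.
  by rewrite ifF //; apply: contraNF hj => /eqP ->; rewrite addrK.
rewrite hcomp_notin ?hk // d0 big1_seq // => j /andP [_ hjs].
by case: eqP => // hj; move: hk; rewrite hj addrK hjs.
Qed.

Lemma hcompM k x y : hcomp k (x * y) =
  \sum_(i <- hsupp x) \sum_(j <- hsupp y)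
     (if i + j == k then hcomp i x * hcomp j y else 0).
Proof.
rewrite {1}(sum_hcomp x) {1}(sum_hcomp y) mulr_suml hcomp_sum; apply: eq_bigr => i _.
rewrite mulr_sumr hcomp_sum; apply: eq_bigr => j _.
by rewrite (hcomp_hom _ (degM (hcomp_deg i x) (hcomp_deg j y))) eq_sym.
Qed.

Lemma hcompM_closed (P : R -> Prop) k (x y : R) :
  P 0 -> (forall a b, P a -> P b -> P (a + b)) ->
  (forall i j, i + j = k -> P (hcomp i x * hcomp j y)) -> P (hcomp k (x * y)).
Proof.
move=> P0 PD Pij; rewrite hcompM.
apply: (big_ind P) => // i _; apply: (big_ind P) => // j _.
by case: eqP => // /Pij.
Qed.

Definition parity (x : R) : R := \sum_(k <- hsupp x) sign k *: hcomp k x.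

Lemma parity_hom j x : x \in deg j -> parity x = sign j *: x.
Proof.
move=> hx; rewrite /parity -(@sum_hcomp_cover (fun k y => sign k *: y) [:: j]) //.
- by rewrite big_seq1 hcomp_hom_id.
- by move=> k; rewrite scaler0.
- by move=> k; rewrite inE => hk; rewrite (hcomp_hom _ hx) ifN.
Qed.

Lemma parityZD a x y : parity (a *: x + y) = a *: parity x + parity y.
Proof.
pose u := undup (hsupp x ++ hsupp y).
have parityE z : (forall k, k \notin u -> hcomp k z = 0) ->
    parity z = \sum_(k <- u) sign k *: hcomp k z.
  move=> hz; rewrite (@sum_hcomp_cover (fun k y => sign k *: y)) ?undup_uniq //.
  by move=> k; rewrite scaler0.
rewrite !parityE.
- rewrite scaler_sumr -big_split; apply: eq_bigr => k _.
  by rewrite hcompZD scalerDr !scalerA mulrC.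
all: by move=> k /hsupp_cover [hx hy]; rewrite ?hcompZD ?hx ?hy ?scaler0 ?addr0.
Qed.

Lemma parityD x y : parity (x + y) = parity x + parity y.
Proof. by have := parityZD 1 x y; rewrite !scale1r. Qed.

Lemma parity0 : parity 0 = 0.
Proof. by rewrite (parity_hom (deg0 0)) scaler0. Qed.

Lemma parityZ a x : parity (a *: x) = a *: parity x.
Proof. by have := parityZD a x 0; rewrite !addr0 parity0 addr0. Qed.

Lemma parity_sum (I : Type) (r : seq I) (F : I -> R) :
  parity (\sum_(i <- r) F i) = \sum_(i <- r) parity (F i).
Proof. exact: (big_morph parity parityD parity0). Qed.

Lemma parity1 : parity 1 = 1.
Proof. by rewrite (parity_hom deg1) scale1r. Qed.

Lemma parityM x y : parity (x * y) = parity x * parity y.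
Proof.
rewrite [parity x]/parity [parity y]/parity {1}(sum_hcomp x) {1}(sum_hcomp y).
rewrite mulr_suml parity_sum mulr_suml; apply: eq_bigr => i _.
rewrite mulr_sumr parity_sum mulr_sumr; apply: eq_bigr => j _.
rewrite (parity_hom (degM (hcomp_deg i x) (hcomp_deg j y))) koszul_signD.
by rewrite -scalerAl -scalerAr scalerA.
Qed.

Lemma parity_deg k x : x \in deg k -> parity x \in deg k.
Proof. by move=> hx; rewrite (parity_hom hx) degZ. Qed.

End GradedAlgebra.

Section CdgaHom.
Variables (K : fieldType) (A B : cdga K) (f : cdga_hom A B).
Local Notation F := (hom_fun f).

Lemma cdga_homZD a x y : F (a *: x + y) = a *: F x + F y.
Proof. by case: (hom_ax f) => H _ _ _ _; apply: H. Qed.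

Lemma cdga_homD x y : F (x + y) = F x + F y.
Proof. by have := cdga_homZD 1 x y; rewrite !scale1r. Qed.

Lemma cdga_hom0 : F 0 = 0.
Proof. by apply: (@addrI _ (F 0)); rewrite -cdga_homD !addr0. Qed.

Lemma cdga_homN x : F (- x) = - F x.
Proof. by have := cdga_homZD (-1) x 0; rewrite addr0 cdga_hom0 addr0 !scaleN1r. Qed.

Lemma cdga_homM x y : F (x * y) = F x * F y.
Proof. by case: (hom_ax f) => _ H _ _ _; apply: H. Qed.

Lemma cdga_hom_deg k x : x \in @cd_deg _ A k -> F x \in @cd_deg _ B k.
Proof. by case: (hom_ax f) => _ _ _ H _; apply: H. Qed.

Lemma cdga_hom_d x : F (@cd_d _ A x) = @cd_d _ B (F x).
Proof. by case: (hom_ax f) => _ _ _ _ H; apply: H. Qed.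

Lemma cdga_hom_sum (I : Type) (r : seq I) (G : I -> cd_car A) :
  F (\sum_(i <- r) G i) = \sum_(i <- r) F (G i).
Proof. exact: (big_morph F cdga_homD cdga_hom0). Qed.

End CdgaHom.

Lemma id_cdga_hom_axiom (K : fieldType) (A : cdga K) : is_cdga_hom (A := A) (B := A) id.
Proof. by []. Qed.

Lemma map_poly_additiveD (R : nzRingType) (f : R -> R) (P Q : {poly R}) :
  f 0 = 0 -> (forall x y, f (x + y) = f x + f y) ->
  map_poly f (P + Q) = map_poly f P + map_poly f Q.
Proof. by move=> f0 fD; apply/polyP => i; rewrite coefD !coef_map_id0 // coefD fD. Qed.

Lemma horner1E (R : nzRingType) (P : {poly R}) n :
  (size P <= n)%N -> P.[1] = \sum_(i < n) P`_i.
Proof.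
move=> h; rewrite (horner_coef_wide 1 h).
by apply: eq_bigr => i _; rewrite expr1n mulr1.
Qed.

Lemma horner1_additive (R : nzRingType) (f : R -> R) (P : {poly R}) :
  f 0 = 0 -> (forall x y, f (x + y) = f x + f y) -> (map_poly f P).[1] = f P.[1].
Proof.
move=> f0 fD; rewrite (horner1E (size_poly _ _)) (horner1E (leqnn _)).
by rewrite (big_morph f fD f0); apply: eq_bigr => i _; rewrite coef_map_id0.
Qed.

Lemma horner1M (R : nzRingType) (P Q : {poly R}) : (P * Q).[1] = P.[1] * Q.[1].
Proof. by rewrite hornerM_comm // /comm_poly mulr1 mul1r. Qed.

Section GradedPolynomials.
Variables (K : fieldType) (A : cdga K).
Local Notation R := (cd_car A).
Local Notation deg := (@cd_deg _ A).
Local Notation d := (@cd_d _ A).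
Local Notation sign := (@koszul_sign K).
Local Notation parity := (@parity _ A).
Implicit Types (P Q : {poly R}) (c : K).

Definition pscale c P : {poly R} := (c%:A)%:P * P.

Lemma coef_pscale c P i : (pscale c P)`_i = c *: P`_i.
Proof. by rewrite /pscale coefCM mulr_algl. Qed.

Lemma pscaleMl c P Q : pscale c (P * Q) = pscale c P * Q.
Proof. by rewrite /pscale mulrA. Qed.

Lemma pscaleMr c P Q : pscale c (P * Q) = P * pscale c Q.
Proof.
have central : P * (c%:A)%:P = (c%:A)%:P * P.
  by apply/polyP => i; rewrite coefMC coefCM mulr_algl mulr_algr.
by rewrite /pscale mulrA -central mulrA.
Qed.

Lemma pscaleA a b P : pscale a (pscale b P) = pscale (a * b) P.
Proof. by apply/polyP => i; rewrite !coef_pscale scalerA. Qed.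

Lemma pscaleDr c P Q : pscale c (P + Q) = pscale c P + pscale c Q.
Proof. by rewrite /pscale mulrDr. Qed.

Lemma pscaleBr c P Q : pscale c (P - Q) = pscale c P - pscale c Q.
Proof. by rewrite /pscale mulrBr. Qed.

Lemma pscaleDl a b P : pscale (a + b) P = pscale a P + pscale b P.
Proof. by apply/polyP => i; rewrite coefD !coef_pscale scalerDl. Qed.

Lemma pscaleNl c P : pscale (- c) P = - pscale c P.
Proof. by apply/polyP => i; rewrite coefN !coef_pscale scaleNr. Qed.

Lemma pscale1 P : pscale 1 P = P.
Proof. by apply/polyP => i; rewrite coef_pscale scale1r. Qed.

Lemma pscale_signK i P : pscale (sign i) (pscale (sign i) P) = P.
Proof. by rewrite pscaleA koszul_sign_sqr pscale1. Qed.

Lemma deriv_pscale c P : (pscale c P)^`() = pscale c P^`().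
Proof. by apply/polyP => i; rewrite coef_deriv !coef_pscale coef_deriv scalerMnr. Qed.

Lemma horner1_pscale c P : (pscale c P).[1] = c *: P.[1].
Proof. by rewrite /pscale hornerCM mulr_algl. Qed.

Lemma map_poly_parityM P Q :
  map_poly parity (P * Q) = map_poly parity P * map_poly parity Q.
Proof.
apply/polyP => i; rewrite coef_map_id0 ?parity0 // !coefM parity_sum.
by apply: eq_bigr => j _; rewrite parityM !coef_map_id0 ?parity0.
Qed.

Lemma map_poly_parity1 : map_poly parity 1 = 1.
Proof.
apply/polyP => i; rewrite coef_map_id0 ?parity0 // !coefC.
by case: eqP; rewrite ?parity1 ?parity0.
Qed.

Lemma map_poly_parityD P Q :
  map_poly parity (P + Q) = map_poly parity P + map_poly parity Q.
Proof. by apply: map_poly_additiveD; [exact: parity0 | exact: parityD]. Qed.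

Lemma map_poly_parity_pscale c P :
  map_poly parity (pscale c P) = pscale c (map_poly parity P).
Proof. by apply/polyP => i; rewrite !(coef_map_id0, coef_pscale) ?parity0 // parityZ. Qed.

Lemma map_poly_dD P Q : map_poly d (P + Q) = map_poly d P + map_poly d Q.
Proof. by apply: map_poly_additiveD; [exact: d0 | exact: dD]. Qed.

Lemma map_poly_dN P : map_poly d (- P) = - map_poly d P.
Proof. by apply/polyP => i; rewrite coefN !coef_map_id0 ?d0 // coefN dN. Qed.

Lemma map_poly_dB P Q : map_poly d (P - Q) = map_poly d P - map_poly d Q.
Proof. by rewrite map_poly_dD map_poly_dN. Qed.

Lemma map_poly_d_pscale c P : map_poly d (pscale c P) = pscale c (map_poly d P).
Proof. by apply/polyP => i; rewrite !(coef_map_id0, coef_pscale) ?d0 // dZ. Qed.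

Lemma map_poly_d_deriv P : map_poly d P^`() = (map_poly d P)^`().
Proof.
by apply/polyP => i; rewrite coef_deriv !coef_map_id0 ?d0 // coef_deriv dMn.
Qed.

Lemma map_poly_dC (c : R) : map_poly d c%:P = (d c)%:P.
Proof. by apply/polyP => i; rewrite coef_map_id0 ?d0 // !coefC; case: eqP; rewrite ?d0. Qed.

Lemma map_poly_dd P : map_poly d (map_poly d P) = 0.
Proof. by apply/polyP => i; rewrite !coef_map_id0 ?d0 // dd coef0. Qed.

Lemma horner1_d P : (map_poly d P).[1] = d P.[1].
Proof. by apply: horner1_additive; [exact: d0 | exact: dD]. Qed.

Definition homog k P := forall i, P`_i \in deg k.

Definition homogb k P : bool := all (fun z => z \in deg k) P.

Lemma homogP k P : reflect (homog k P) (homogb k P).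
Proof.
apply: (iffP allP) => [h i | h z /(nthP 0) [i hi <-]]; last exact: h.
case: (ltnP i (size P)) => hi; first by apply: h; apply: mem_nth.
by rewrite nth_default ?deg0.
Qed.

Lemma homog0 k : homog k 0.
Proof. by move=> i; rewrite coef0 deg0. Qed.

Lemma homogD k P Q : homog k P -> homog k Q -> homog k (P + Q).
Proof. by move=> hP hQ n; rewrite coefD degD. Qed.

Lemma homogB k P Q : homog k P -> homog k Q -> homog k (P - Q).
Proof. by move=> hP hQ n; rewrite coefB degB. Qed.

Lemma homog_pscale k c P : homog k P -> homog k (pscale c P).
Proof. by move=> hP n; rewrite coef_pscale degZ. Qed.

Lemma homogM i j P Q : homog i P -> homog j Q -> homog (i + j) (P * Q).
Proof. by move=> hP hQ n; rewrite coefM deg_sum // => m _; rewrite degM. Qed.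

Lemma homog_d k P : homog k P -> homog (k + 1) (map_poly d P).
Proof. by move=> hP n; rewrite coef_map_id0 ?d0 // d_deg. Qed.

Lemma homog_deriv k P : homog k P -> homog k P^`().
Proof. by move=> hP n; rewrite coef_deriv degMn. Qed.

Lemma homog_parity k P : homog k P -> homog k (map_poly parity P).
Proof. by move=> hP n; rewrite coef_map_id0 ?parity0 // parity_deg. Qed.

Lemma horner1_homog k P : homog k P -> P.[1] \in deg k.
Proof. by move=> hP; rewrite (horner1E (leqnn _)) deg_sum. Qed.

Lemma map_poly_parity_homog k P :
  homog k P -> map_poly parity P = pscale (sign k) P.
Proof.
move=> hP; apply/polyP => i.
by rewrite coef_map_id0 ?parity0 // coef_pscale (parity_hom (hP i)).
Qed.

Lemma map_poly_d_leibniz k P Q : homog k P ->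
  map_poly d (P * Q) = map_poly d P * Q + pscale (sign k) (P * map_poly d Q).
Proof.
move=> hP; apply/polyP => n.
rewrite coef_map_id0 ?d0 // coefD coef_pscale !coefM d_sum scaler_sumr -big_split /=.
by apply: eq_bigr => j _; rewrite (d_leibniz _ (hP j)) !coef_map_id0 ?d0.
Qed.

Lemma homog_mulC i j P Q : homog i P -> homog j Q ->
  P * Q = pscale (sign (i * j)) (Q * P).
Proof.
move=> hP hQ; apply/polyP => n.
rewrite coef_pscale coefM coefMr scaler_sumr; apply: eq_bigr => m _.
exact: deg_mulC.
Qed.

Definition antideriv Q : {poly R} :=
  \poly_(i < (size Q).+1) (if i is n.+1 then (n.+1%:R : K)^-1 *: Q`_n else 0).

Lemma coef_antideriv Q i :
  (antideriv Q)`_i = if i is n.+1 then (n.+1%:R : K)^-1 *: Q`_n else 0.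
Proof.
rewrite coef_poly; case: i => [|n] //=; rewrite ltnS.
by case: ltnP => // h; rewrite nth_default ?scaler0.
Qed.

Lemma coef0_antideriv Q : (antideriv Q)`_0 = 0.
Proof. exact: coef_antideriv. Qed.

Lemma antideriv0 : antideriv 0 = 0.
Proof. by apply/polyP => -[|n]; rewrite coef_antideriv !coef0 // scaler0. Qed.

Lemma antiderivD Q1 Q2 : antideriv (Q1 + Q2) = antideriv Q1 + antideriv Q2.
Proof.
by apply/polyP => -[|n]; rewrite coefD !coef_antideriv ?addr0 // coefD scalerDr.
Qed.

Lemma antiderivN Q : antideriv (- Q) = - antideriv Q.
Proof. by apply/polyP => -[|n]; rewrite coefN !coef_antideriv ?oppr0 // coefN scalerN. Qed.

Lemma antiderivB Q1 Q2 : antideriv (Q1 - Q2) = antideriv Q1 - antideriv Q2.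
Proof. by rewrite antiderivD antiderivN. Qed.

Lemma map_poly_d_antideriv Q : map_poly d (antideriv Q) = antideriv (map_poly d Q).
Proof.
apply/polyP => -[|n]; rewrite coef_map_id0 ?d0 // !coef_antideriv ?d0 //.
by rewrite coef_map_id0 ?d0 // dZ.
Qed.

Lemma homog_antideriv k Q : homog k Q -> homog k (antideriv Q).
Proof. by move=> hQ -[|n]; rewrite coef_antideriv ?deg0 ?degZ. Qed.

Lemma horner1_antideriv_closed (S : R -> Prop) Q :
  S 0 -> (forall x y, S x -> S y -> S (x + y)) ->
  (forall (a : K) x, S x -> S (a *: x)) -> (forall i, S Q`_i) ->
  S (antideriv Q).[1].
Proof.
move=> S0 SD SZ hQ; rewrite (horner1E (leqnn _)).
elim/big_ind: _ => // i _; rewrite coef_antideriv.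
by case: (nat_of_ord i) => [|n] //; apply: SZ.
Qed.

Hypothesis charK0 : [pchar K] =i pred0.

Let natr_neq0 n : (n.+1%:R : K) != 0.
Proof. by move/pcharf0P: charK0 => ->. Qed.

Lemma antiderivK Q : (antideriv Q)^`() = Q.
Proof.
apply/polyP => i; rewrite coef_deriv coef_antideriv -scaler_nat scalerA.
by rewrite mulfV ?scale1r ?natr_neq0.
Qed.

Lemma antideriv_deriv P : antideriv P^`() = P - (P`_0)%:P.
Proof.
apply/polyP => -[|n]; rewrite coef_antideriv coefB coefC /= ?subrr //.
by rewrite subr0 coef_deriv -scaler_nat scalerA mulVf ?scale1r ?natr_neq0.
Qed.

End GradedPolynomials.

Section Forms.
Variables (K : fieldType) (A : cdga K).
Local Notation R := (cd_car A).
Local Notation deg := (@cd_deg _ A).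
Local Notation d := (@cd_d _ A).
Local Notation sign := (@koszul_sign K).
Local Notation parity := (@parity _ A).
Local Notation pscale := (@pscale _ A).
Local Notation homog := (@homog _ A).

(** Polynomial forms [A[t] ⊕ A[t] dt] on the interval: a pair [(P, Q)] stands
    for [P + dt Q], with [dt] of degree 1 written to the left, so that
    [(P1 + dt Q1) (P2 + dt Q2) = P1 P2 + dt (parity(P1) Q2 + Q1 P2)] and
    [d (P + dt Q) = dP + dt (P' - dQ)]. *)

Definition forms := ({poly R} * {poly R})%type.
HB.instance Definition _ := Choice.copy forms ({poly R} * {poly R})%type.
HB.instance Definition _ := GRing.Zmodule.copy forms ({poly R} * {poly R})%type.

Definition forms_mul (u v : forms) : forms :=
  (u.1 * v.1, map_poly parity u.1 * v.2 + u.2 * v.1).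

Definition forms_one : forms := (1, 0).

Lemma forms_mulA : associative forms_mul.
Proof.
move=> [P1 Q1] [P2 Q2] [P3 Q3]; rewrite /forms_mul /=.
congr (_, _); first by rewrite mulrA.
by rewrite map_poly_parityM mulrDr mulrDl !mulrA addrA.
Qed.

Lemma forms_mul1l : left_id forms_one forms_mul.
Proof. by move=> [P Q]; rewrite /forms_mul /= map_poly_parity1 !mul1r mul0r addr0. Qed.

Lemma forms_mul1r : right_id forms_one forms_mul.
Proof. by move=> [P Q]; rewrite /forms_mul /= mulr0 add0r !mulr1. Qed.

Lemma forms_mulDl : left_distributive forms_mul +%R.
Proof.
move=> [P1 Q1] [P2 Q2] [P3 Q3]; rewrite /forms_mul /=.
congr (_, _); first by rewrite mulrDl.
by rewrite map_poly_parityD !mulrDl addrACA.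
Qed.

Lemma forms_mulDr : right_distributive forms_mul +%R.
Proof.
move=> [P1 Q1] [P2 Q2] [P3 Q3]; rewrite /forms_mul /=.
congr (_, _); first by rewrite mulrDr.
by rewrite !mulrDr addrACA.
Qed.

Lemma forms_one_neq0 : forms_one != 0.
Proof. by apply/eqP => /(congr1 fst) /= /eqP; rewrite oner_eq0. Qed.

HB.instance Definition _ := GRing.Zmodule_isNzRing.Build forms
  forms_mulA forms_mul1l forms_mul1r forms_mulDl forms_mulDr forms_one_neq0.

Lemma forms_mulE (u v : forms) : u * v = (u.1 * v.1, map_poly parity u.1 * v.2 + u.2 * v.1).
Proof. by []. Qed.

Definition forms_scale (c : K) (u : forms) : forms := (pscale c u.1, pscale c u.2).

Lemma forms_scaleA a b u : forms_scale a (forms_scale b u) = forms_scale (a * b) u.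
Proof. by rewrite /forms_scale /= !pscaleA. Qed.

Lemma forms_scale1 : left_id 1 forms_scale.
Proof. by move=> [P Q]; rewrite /forms_scale /= !pscale1. Qed.

Lemma forms_scaleDr : right_distributive forms_scale +%R.
Proof. by move=> c [P1 Q1] [P2 Q2]; rewrite /forms_scale /= !pscaleDr. Qed.

Lemma forms_scaleDl u : {morph forms_scale^~ u : a b / a + b}.
Proof. by move=> a b; rewrite /forms_scale /= !pscaleDl. Qed.

HB.instance Definition _ := GRing.Zmodule_isLmodule.Build K forms
  forms_scaleA forms_scale1 forms_scaleDr forms_scaleDl.

Lemma forms_scaleE (a : K) (u : forms) : a *: u = (pscale a u.1, pscale a u.2).
Proof. by []. Qed.

Lemma forms_scaleAl (a : K) (u v : forms) : a *: (u * v) = (a *: u) * v.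
Proof.
case: u v => [P1 Q1] [P2 Q2]; rewrite !forms_mulE !forms_scaleE /=.
by rewrite map_poly_parity_pscale pscaleDr !pscaleMl.
Qed.

HB.instance Definition _ := GRing.Lmodule_isLalgebra.Build K forms forms_scaleAl.

Lemma forms_scaleAr (a : K) (u v : forms) : a *: (u * v) = u * (a *: v).
Proof.
case: u v => [P1 Q1] [P2 Q2]; rewrite !forms_mulE !forms_scaleE /=.
by rewrite pscaleDr !pscaleMr.
Qed.

HB.instance Definition _ := GRing.Lalgebra_isAlgebra.Build K forms forms_scaleAr.

Lemma forms_sum1 (I : Type) (r : seq I) (F : I -> forms) :
  (\sum_(i <- r) F i).1 = \sum_(i <- r) (F i).1.
Proof. by elim: r => [|a r IH]; rewrite ?big_nil ?big_cons //= -IH. Qed.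

Lemma forms_sum2 (I : Type) (r : seq I) (F : I -> forms) :
  (\sum_(i <- r) F i).2 = \sum_(i <- r) (F i).2.
Proof. by elim: r => [|a r IH]; rewrite ?big_nil ?big_cons //= -IH. Qed.

Definition forms_deg k : pred forms := fun u => homogb k u.1 && homogb (k - 1) u.2.

Lemma forms_degP k u : reflect (homog k u.1 /\ homog (k - 1) u.2) (u \in forms_deg k).
Proof.
rewrite unfold_in /forms_deg.
by apply: (iffP andP) => [[/homogP ? /homogP ?] | [/homogP ? /homogP ?]]; split.
Qed.

Lemma forms_deg0 k : 0 \in forms_deg k.
Proof. by apply/forms_degP; split; apply: homog0. Qed.

Lemma forms_degZD k (a : K) u v :
  u \in forms_deg k -> v \in forms_deg k -> a *: u + v \in forms_deg k.
Proof.
move=> /forms_degP [h1 h2] /forms_degP [h3 h4]; apply/forms_degP; split.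
  exact: homogD (homog_pscale _ h1) h3.
exact: homogD (homog_pscale _ h2) h4.
Qed.

Lemma forms_deg1 : 1 \in forms_deg 0.
Proof.
apply/forms_degP; split => n /=; last by rewrite coef0 deg0.
by rewrite coefC; case: eqP => _; rewrite ?deg1 ?deg0.
Qed.

Lemma forms_degM i j u v :
  u \in forms_deg i -> v \in forms_deg j -> u * v \in forms_deg (i + j).
Proof.
move=> /forms_degP [h1 h2] /forms_degP [h3 h4]; apply/forms_degP; split => /=.
  exact: homogM.
apply: homogD; first by have := homogM (homog_parity h1) h4; rewrite addrA.
by have := homogM h2 h3; rewrite addrAC.
Qed.

Lemma forms_deg_mulC i j u v : u \in forms_deg i -> v \in forms_deg j ->
  u * v = sign (i * j) *: (v * u).
Proof.
case: u v => [P1 Q1] [P2 Q2] /forms_degP [/= h1 h2] /forms_degP [/= h3 h4].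
rewrite !forms_mulE !forms_scaleE /=.
congr (_, _); first exact: homog_mulC.
rewrite (map_poly_parity_homog h1) (map_poly_parity_homog h3) pscaleDr -!pscaleMl.
rewrite (homog_mulC h1 h4) (homog_mulC h2 h3) pscaleA addrC.
have e1 : sign i * sign (i * (j - 1)) = sign (i * j).
  by rewrite mulrBr mulr1 koszul_signD koszul_signN mulrC -mulrA koszul_sign_sqr mulr1.
have e2 : sign ((i - 1) * j) = sign (i * j) * sign j.
  by rewrite mulrBl mul1r koszul_signD koszul_signN.
by rewrite e1 e2 -pscaleA.
Qed.

Definition forms_d (u : forms) : forms := (map_poly d u.1, u.1^`() - map_poly d u.2).

Lemma forms_dD u v : forms_d (u + v) = forms_d u + forms_d v.
Proof.
case: u v => [P1 Q1] [P2 Q2]; rewrite /forms_d /=; congr (_, _); first exact: map_poly_dD.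
by rewrite derivD map_poly_dD opprD addrACA.
Qed.

Lemma forms_dZ (a : K) u : forms_d (a *: u) = a *: forms_d u.
Proof.
case: u => [P Q]; rewrite /forms_d !forms_scaleE /=.
by rewrite !map_poly_d_pscale deriv_pscale pscaleBr.
Qed.

Lemma forms_d_deg k u : u \in forms_deg k -> forms_d u \in forms_deg (k + 1).
Proof.
move=> /forms_degP [h1 h2]; apply/forms_degP; split; first exact: homog_d.
rewrite addrK; apply: homogB; first exact: homog_deriv.
by have := homog_d h2; rewrite subrK.
Qed.

Lemma forms_d_eq0 P Q :
  forms_d (P, Q) = 0 -> map_poly d P = 0 /\ P^`() = map_poly d Q.
Proof. by case=> dP /eqP; rewrite subr_eq0 => /eqP. Qed.

Lemma forms_dd u : forms_d (forms_d u) = 0.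
Proof.
case: u => [P Q]; rewrite /forms_d /=.
by rewrite map_poly_dd map_poly_dB map_poly_d_deriv map_poly_dd subr0 subrr.
Qed.

Lemma forms_d_leibniz i u v : u \in forms_deg i ->
  forms_d (u * v) = forms_d u * v + sign i *: (u * forms_d v).
Proof.
case: u v => [P1 Q1] [P2 Q2] /forms_degP [/= h1 h2].
rewrite /forms_d !forms_mulE !forms_scaleE /=.
congr (_, _); first exact: map_poly_d_leibniz.
have hs := map_poly_parity_homog h1.
have E1 : map_poly d (map_poly parity P1 * Q2) =
    pscale (sign i) (map_poly d P1 * Q2) + P1 * map_poly d Q2.
  by rewrite (map_poly_d_leibniz _ (homog_parity h1)) hs map_poly_d_pscale
             -!pscaleMl pscale_signK.
have E2 : map_poly d (Q1 * P2) =
    map_poly d Q1 * P2 - pscale (sign i) (Q1 * map_poly d P2).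
  by rewrite (map_poly_d_leibniz _ h2) koszul_signD koszul_signN koszul_sign1
             mulrN1 pscaleNl.
have E3 : map_poly parity (map_poly d P1) * Q2 = - pscale (sign i) (map_poly d P1 * Q2).
  by rewrite (map_poly_parity_homog (homog_d h1)) koszul_signD koszul_sign1
             mulrN1 pscaleNl mulNr pscaleMl.
have E4 : pscale (sign i) (map_poly parity P1 * (P2^`() - map_poly d Q2) +
                           Q1 * map_poly d P2)
    = P1 * P2^`() - P1 * map_poly d Q2 + pscale (sign i) (Q1 * map_poly d P2).
  by rewrite hs pscaleDr -pscaleMl pscale_signK mulrBr.
rewrite derivM map_poly_dD E1 E2 E3 E4 mulrBl.
by rewrite /= !opprD !opprK !addrA [LHS](ACl (3*1*5*2*4*6)%AC).
Qed.

End Forms.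

Section SubCdga.
Variables (K : fieldType) (A : cdga K).
Local Notation R := (cd_car A).
Local Notation deg := (@cd_deg _ A).
Local Notation d := (@cd_d _ A).
Local Notation hcomp := (@hcomp _ A).

Record subcdga := SubCdga {
  sub_pred :> {pred R};
  sub0 : 0 \in sub_pred;
  sub1 : 1 \in sub_pred;
  subZD : forall a x y, x \in sub_pred -> y \in sub_pred -> a *: x + y \in sub_pred;
  subM : forall x y, x \in sub_pred -> y \in sub_pred -> x * y \in sub_pred;
  sub_d : forall x, x \in sub_pred -> d x \in sub_pred;
  sub_hcomp : forall k x, x \in sub_pred -> hcomp k x \in sub_pred }.

Definition sub_quasi_iso (S : subcdga) : Prop :=
  (forall k s, s \in S -> cocycle k s -> coboundary k s ->
     exists s', [/\ s' \in S, s' \in deg (k - 1) & s = d s']) /\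
  (forall k z, cocycle k z -> exists s a,
     [/\ s \in S, cocycle k s, a \in deg (k - 1) & z = s + d a]).

End SubCdga.

Section Paths.
Variables (K : fieldType) (A : cdga K) (S : subcdga A).
Local Notation R := (cd_car A).
Local Notation deg := (@cd_deg _ A).
Local Notation d := (@cd_d _ A).
Local Notation hcomp := (@hcomp _ A).
Local Notation hsupp := (@hsupp _ A).
Local Notation forms := (@forms _ A).
Local Notation homog := (@homog _ A).

(** Forms whose value at [t = 0] lies in [S]: a relative path object, on which
    evaluation at [t = 1] is an acyclic fibration onto [A] when [S -> A] is a
    quasi-isomorphism. *)

Definition paths_pred : pred forms := fun u => u.1`_0 \in S.

Lemma paths_subalg_closed : GRing.subsemialg_closed paths_pred.
Proof.
split.
- by rewrite unfold_in /paths_pred /= coefC eqxx sub1.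
- split; first by rewrite unfold_in /paths_pred /= coef0 sub0.
  move=> u v; rewrite !unfold_in /paths_pred /= coefD => hu hv.
  by have := subZD 1 hu hv; rewrite scale1r.
- move=> a u; rewrite !unfold_in /paths_pred /= coef_pscale => hu.
  by have := subZD a hu (sub0 S); rewrite addr0.
- by move=> u v; rewrite !unfold_in /paths_pred /= coef0M; apply: subM.
Qed.

Record paths := Paths { pval : forms; pvalP : pval \in paths_pred }.
HB.instance Definition _ := [isSub for pval].
HB.instance Definition _ := [Choice of paths by <:].
HB.instance Definition _ :=
  GRing.SubChoice_isSubAlgebra.Build K forms paths_pred paths paths_subalg_closed.

Lemma pval_inj : injective pval. Proof. exact: val_inj. Qed.

Lemma pval_sum (I : Type) (r : seq I) (F : I -> paths) :
  pval (\sum_(i <- r) F i) = \sum_(i <- r) pval (F i).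
Proof. by elim: r => [|a r IH]; rewrite ?big_nil ?big_cons //= -IH. Qed.

Lemma poly_in_paths (s : R) (P : {poly R}) :
  s \in S -> P`_0 = 0 -> (s%:P + P, 0) \in paths_pred.
Proof. by move=> hs P0; rewrite unfold_in /paths_pred /= coefD coefC P0 addr0. Qed.

Lemma coef0_paths (x : paths) : (pval x).1`_0 \in S.
Proof. by have := pvalP x; rewrite unfold_in. Qed.

Definition paths_deg k : pred paths := fun x => pval x \in forms_deg k.

Definition forms_hcomp k (u : forms) : forms :=
  (map_poly (hcomp k) u.1, map_poly (hcomp (k - 1)) u.2).

Lemma forms_hcomp_paths k u : u \in paths_pred -> forms_hcomp k u \in paths_pred.
Proof. by rewrite !unfold_in /paths_pred /= coef_map_id0 ?hcomp0 //; apply: sub_hcomp. Qed.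

Definition paths_hcomp k (x : paths) : paths := Paths (forms_hcomp_paths k (pvalP x)).

Lemma paths_hcomp_deg k x : paths_hcomp k x \in paths_deg k.
Proof. by apply/forms_degP; split => i /=; rewrite coef_map_id0 ?hcomp0 ?hcomp_deg. Qed.

Definition coef_hsupp (P : {poly R}) : seq int :=
  flatten [seq hsupp P`_i | i <- iota 0 (size P)].

Lemma hcomp_coef_hsupp P k i : k \notin coef_hsupp P -> hcomp k P`_i = 0.
Proof.
move=> hk; case: (ltnP i (size P)) => hi; last by rewrite nth_default ?hcomp0.
apply: hcomp_notin; apply: contra hk => hk; apply/flatten_mapP; exists i => //.
by rewrite mem_iota add0n hi.
Qed.

Lemma subr1_inj : injective (fun k : int => k - 1).
Proof. exact: addIr. Qed.

Lemma paths_decomp (x : paths) :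
  exists s f, (forall k, f k \in paths_deg k) /\ x = \sum_(k <- s) f k.
Proof.
pose s := undup (coef_hsupp (pval x).1 ++ map (fun j => j + 1) (coef_hsupp (pval x).2)).
exists s, (paths_hcomp ^~ x); split; first by move=> k; exact: paths_hcomp_deg.
apply: pval_inj; rewrite pval_sum; apply: injective_projections => /=.
  rewrite forms_sum1; apply/polyP => i; rewrite coef_sum /=.
  under eq_bigr do rewrite coef_map_id0 ?hcomp0 //.
  apply: hcomp_cover; first exact: undup_uniq.
  move=> k hk; apply: hcomp_coef_hsupp; apply: contra hk => hk.
  by rewrite mem_undup mem_cat hk.
rewrite forms_sum2; apply/polyP => i; rewrite coef_sum /=.
under eq_bigr do rewrite coef_map_id0 ?hcomp0 //.
rewrite -(big_map (fun k => k - 1) xpredT (fun j => hcomp j (pval x).2`_i)).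
apply: hcomp_cover; first by rewrite map_inj_uniq ?undup_uniq //; exact: subr1_inj.
move=> j hj; apply: hcomp_coef_hsupp; apply: contra hj => hj.
apply/mapP; exists (j + 1); last by rewrite addrK.
by rewrite mem_undup mem_cat; apply/orP; right; apply: map_f.
Qed.

Lemma paths_direct s (f : int -> paths) : uniq s -> (forall k, f k \in paths_deg k) ->
  \sum_(k <- s) f k = 0 -> forall k, k \in s -> f k = 0.
Proof.
move=> us hf hs k ks.
have hs1 : \sum_(k <- s) (pval (f k)).1 = 0 by rewrite -forms_sum1 -pval_sum hs.
have hs2 : \sum_(k <- s) (pval (f k)).2 = 0 by rewrite -forms_sum2 -pval_sum hs.
apply: pval_inj => /=; apply: injective_projections => /=; apply/polyP => n; rewrite coef0.
  apply: (@deg_direct _ A s (fun k => (pval (f k)).1`_n) us) => // [j|].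
    by case/forms_degP: (hf j).
  by rewrite -coef_sum hs1 coef0.
have := @deg_direct _ A (map (fun k => k - 1) s) (fun j => (pval (f (j + 1))).2`_n).
move/(_ _ _ _ (k - 1)); rewrite subrK; apply.
- by rewrite map_inj_uniq //; exact: subr1_inj.
- by move=> j; case/forms_degP: (hf (j + 1)); rewrite addrK.
- rewrite big_map (eq_bigr (fun k => (pval (f k)).2`_n)) => [|j _]; last by rewrite subrK.
  by rewrite -coef_sum hs2 coef0.
- exact: map_f.
Qed.

Lemma forms_d_paths u : u \in paths_pred -> forms_d u \in paths_pred.
Proof. by rewrite !unfold_in /paths_pred /= coef_map_id0 ?d0 //; apply: sub_d. Qed.

Definition paths_d (x : paths) : paths := Paths (forms_d_paths (pvalP x)).

Lemma paths_cdga_axiom : is_cdga paths_deg paths_d.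
Proof.
split.
- by move=> k; split => [|a x y]; [exact: forms_deg0 | exact: forms_degZD].
- exact: paths_decomp.
- exact: paths_direct.
- split; first exact: forms_deg1.
    by move=> i j x y hx hy; exact: forms_degM hx hy.
  by move=> i j x y hx hy; apply: pval_inj; exact: forms_deg_mulC hx hy.
- split.
  + by move=> a x y; apply: pval_inj; rewrite /= forms_dD forms_dZ.
  + by move=> k x hx; exact: forms_d_deg hx.
  + by move=> x; apply: pval_inj; exact: forms_dd.
  + by move=> i x y hx; apply: pval_inj; exact: forms_d_leibniz hx.
Qed.

Definition paths_cdga : cdga K := CDGA paths_cdga_axiom.

End Paths.

Section EvaluationAtOne.
Variables (K : fieldType) (A : cdga K) (S : subcdga A).
Local Notation R := (cd_car A).
Local Notation deg := (@cd_deg _ A).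
Local Notation d := (@cd_d _ A).
Local Notation paths := (paths S).
Local Notation paths_deg := (@paths_deg _ _ S).
Local Notation homog := (@homog _ A).

Definition ev1 (x : paths) : R := (pval x).1.[1].

Lemma ev1_hom_axiom : is_cdga_hom (A := paths_cdga S) (B := A) ev1.
Proof.
split.
- by move=> a x y; rewrite /ev1 /= hornerD horner1_pscale.
- by move=> x y; rewrite /ev1 /= horner1M.
- by rewrite /ev1 /= hornerC.
- by move=> k x /forms_degP [h1 _]; exact: horner1_homog.
- by move=> x; rewrite /ev1 /= horner1_d.
Qed.

Definition ev1_hom : cdga_hom (paths_cdga S) A := CDGAHom ev1_hom_axiom.

Definition path_of_poly (s : R) (P : {poly R}) (hs : s \in S) (P0 : P`_0 = 0) : paths :=
  Paths (poly_in_paths hs P0).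

Lemma path_of_poly_deg k s P hs P0 : s \in deg k -> homog k P ->
  @path_of_poly s P hs P0 \in paths_deg k.
Proof.
move=> hsk hP; apply/forms_degP; split => i /=; last by rewrite coef0 deg0.
by rewrite coefD coefC degD //; case: eqP; rewrite ?deg0.
Qed.

Lemma ev1_fibration : fibration ev1_hom.
Proof.
move=> k z hz.
have P0 : (z%:P * 'X)`_0 = 0 by rewrite coefMX.
exists (path_of_poly (sub0 S) P0); split.
  apply: path_of_poly_deg; first exact: deg0.
  by move=> [|[|i]]; rewrite coefMX ?coefC /= ?deg0.
by rewrite /= /ev1 /= hornerD hornerMX !hornerC mulr1 add0r.
Qed.

Hypothesis charK0 : [pchar K] =i pred0.

Lemma closed_form_decomp (P Q : {poly R}) : forms_d (P, Q) = 0 ->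
  P = (P`_0)%:P + map_poly d (antideriv Q).
Proof.
case/forms_d_eq0=> _ dP.
by rewrite map_poly_d_antideriv -dP antideriv_deriv // addrC subrK.
Qed.

Hypothesis S_quasi_iso : sub_quasi_iso S.

Lemma ev1_cohom_inj k (x : cd_car (paths_cdga S)) : cocycle k x ->
  coboundary k (ev1 x) -> coboundary k x.
Proof.
case: x => [[P Q] hx] [/forms_degP [/= hP hQ] /(congr1 val) /= hdx] [a [ha hpa]].
have eP := closed_form_decomp hdx.
have hIQ : homog (k - 1) (antideriv Q) by exact: homog_antideriv.
have P0_cocycle : cocycle k P`_0.
  split; first exact: hP.
  have [dP _] := forms_d_eq0 hdx.
  by rewrite -coef_map_id0 ?d0 // dP coef0.
have P0_coboundary : coboundary k P`_0.
  exists (a - (antideriv Q).[1]); split; first by rewrite degB // horner1_homog.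
  by rewrite dB -horner1_d -hpa /ev1 /= [in RHS]eP hornerD hornerC addrK.
have [s' [s'S hs' e0]] := S_quasi_iso.1 k _ hx P0_cocycle P0_coboundary.
exists (path_of_poly s'S (coef0_antideriv Q)); split; first exact: path_of_poly_deg.
apply: pval_inj; rewrite /= /forms_d /=.
rewrite map_poly_dD map_poly_dC -e0 -eP derivD derivC add0r antiderivK //.
by rewrite map_poly0 subr0.
Qed.

Lemma ev1_cohom_surj k z : cocycle k z -> exists (x : cd_car (paths_cdga S)) y,
  cocycle k x /\ y \in deg (k - 1) /\ z = ev1 x + d y.
Proof.
move=> /(S_quasi_iso.2 k) [s [a [sS [hs ds] ha ->]]].
exists (path_of_poly sS (coef0 _ _)), a; split; last by rewrite /ev1 /= addr0 hornerC.
split; first exact: path_of_poly_deg _ _ hs (homog0 _ k).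
apply: pval_inj; rewrite /= /forms_d /= addr0 map_poly_dC ds derivC map_poly0.
by rewrite subr0.
Qed.

Lemma ev1_quasi_iso : quasi_iso ev1_hom.
Proof. by move=> k; split; [exact: ev1_cohom_inj | exact: ev1_cohom_surj]. Qed.

End EvaluationAtOne.

Section TauIdeal.
Variables (K : fieldType) (A : cdga K).
Local Notation R := (cd_car A).
Local Notation deg := (@cd_deg _ A).
Local Notation d := (@cd_d _ A).
Local Notation I := (@tau_ideal _ A).

Lemma tau_ideal0 : I 0.
Proof. by exists [::]; rewrite big_nil. Qed.

Lemma tau_idealD x y : I x -> I y -> I (x + y).
Proof.
move=> [s [hs ->]] [s' [hs' ->]]; exists (s ++ s'); split; last by rewrite big_cat.
by move=> p; rewrite mem_cat => /orP [] ?; [apply: hs | apply: hs'].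
Qed.

Lemma tau_idealMl c x : I x -> I (c * x).
Proof.
move=> [s [hs ->]]; exists [seq (c * p.1, p.2) | p <- s]; split.
  by move=> p /mapP [q hq ->] /=; apply: hs.
by rewrite big_map mulr_sumr; apply: eq_bigr => p _; rewrite mulrA.
Qed.

Lemma tau_idealZ (a : K) x : I x -> I (a *: x).
Proof. by move=> h; rewrite -mulr_algl; apply: tau_idealMl. Qed.

Lemma tau_idealB x y : I x -> I y -> I (x - y).
Proof. by move=> hx hy; rewrite -scaleN1r; apply: tau_idealD => //; apply: tau_idealZ. Qed.

Lemma tau_ideal_sum (J : Type) (r : seq J) (F : J -> R) :
  (forall i, I (F i)) -> I (\sum_(i <- r) F i).
Proof. by move=> h; apply: (big_ind I); [exact: tau_ideal0 | exact: tau_idealD |]. Qed.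

Lemma tau_ideal_gen g : tau_gen g -> I g.
Proof.
move=> h; exists [:: (1, g)]; split; last by rewrite big_seq1 mul1r.
by move=> p; rewrite inE => /eqP ->.
Qed.

Lemma tau_ideal_deg k x : k < 0 -> x \in deg k -> I x.
Proof. by move=> hk hx; apply: tau_ideal_gen; exists k; split => //; left. Qed.

Lemma tau_ideal_d k x : k < 0 -> x \in deg k -> I (d x).
Proof. by move=> hk hx; apply: tau_ideal_gen; exists k; split => //; right; exists x. Qed.

End TauIdeal.

Section SectionOfEvaluation.
Variables (K : fieldType) (A : cdga K) (S : subcdga A).
Local Notation R := (cd_car A).
Local Notation deg := (@cd_deg _ A).
Local Notation d := (@cd_d _ A).
Local Notation I := (@tau_ideal _ A).
Hypothesis charK0 : [pchar K] =i pred0.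
Hypothesis S_neg : forall k s, k < 0 -> s \in S -> s \in deg k -> s = 0.
Variable g : cdga_hom A (paths_cdga S).
Hypothesis g_section : forall x, ev1 (hom_fun g x) = x.
Local Notation G x := (pval (hom_fun g x)).

Definition ev0 x := (G x).1`_0.

Definition htpy x := (antideriv (G x).2).[1].

Lemma ev0D x y : ev0 (x + y) = ev0 x + ev0 y.
Proof. by rewrite /ev0 cdga_homD /= coefD. Qed.

Lemma ev00 : ev0 0 = 0.
Proof. by rewrite /ev0 cdga_hom0 /= coef0. Qed.

Lemma ev0N x : ev0 (- x) = - ev0 x.
Proof. by rewrite /ev0 cdga_homN /= coefN. Qed.

Lemma ev0M x y : ev0 (x * y) = ev0 x * ev0 y.
Proof. by rewrite /ev0 cdga_homM /= coef0M. Qed.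

Lemma ev0_d x : ev0 (d x) = d (ev0 x).
Proof. by rewrite /ev0 cdga_hom_d /= coef_map_id0 // d0. Qed.

Lemma ev0_deg k x : x \in deg k -> ev0 x \in deg k.
Proof. by move=> /(cdga_hom_deg g) /forms_degP [h _]; exact: h. Qed.

Lemma ev0_neg k x : k < 0 -> x \in deg k -> ev0 x = 0.
Proof. by move=> hk hx; apply: S_neg hk (coef0_paths _) (ev0_deg hx). Qed.

Lemma ev0_tau_ideal x : I x -> ev0 x = 0.
Proof.
move=> [s [hs ->]]; rewrite (big_morph ev0 ev0D ev00) big1_seq // => p /andP [_ hp].
rewrite ev0M; have [k [hk [hg | [h [hh ->]]]]] := hs p hp.
  by rewrite (ev0_neg hk hg) mulr0.
by rewrite ev0_d (ev0_neg hk hh) d0 mulr0.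
Qed.

Lemma htpy_deg k x : x \in deg k -> htpy x \in deg (k - 1).
Proof.
by move=> /(cdga_hom_deg g) /forms_degP [_ hQ]; apply/horner1_homog/homog_antideriv.
Qed.

Lemma tau_gen_coef b : tau_gen b -> forall i, I (G b).1`_i /\ I (G b).2`_i.
Proof.
have lt_k1 (k : int) : k < 0 -> k - 1 < 0 by lia.
move=> [k [hk [hb | [h [hh ->]]]]] i.
  have /forms_degP [h1 h2] := cdga_hom_deg g hb.
  by split; [exact: tau_ideal_deg hk (h1 i) | exact: tau_ideal_deg (lt_k1 _ hk) (h2 i)].
rewrite cdga_hom_d /forms_d /=.
have /forms_degP [h1 h2] := cdga_hom_deg g hh; split.
  by rewrite coef_map_id0 ?d0 //; apply: tau_ideal_d hk (h1 i).
rewrite coefB coef_deriv coef_map_id0 ?d0 //; apply: tau_idealB.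
  exact: tau_ideal_deg hk (degMn _ (h1 _)).
exact: tau_ideal_d (lt_k1 _ hk) (h2 i).
Qed.

Lemma tau_ideal_htpy z : I z -> I (htpy z).
Proof.
move=> [s [hs ->]]; apply: horner1_antideriv_closed;
  [exact: tau_ideal0 | exact: tau_idealD | exact: tau_idealZ |] => i.
rewrite cdga_hom_sum pval_sum forms_sum2 coef_sum big_seq.
apply: (big_ind I); [exact: tau_ideal0 | exact: tau_idealD |] => p hp.
have hc := tau_gen_coef (hs p hp).
rewrite cdga_homM /= coefD !coefM; apply: tau_idealD; apply: tau_ideal_sum => j;
  apply: tau_idealMl; [exact: (hc _).2 | exact: (hc _).1].
Qed.

Lemma homotopy_formula x : x = ev0 x + d (htpy x) + htpy (d x).
Proof.
rewrite /htpy /ev0 cdga_hom_d /= -{1}(g_section x) /ev1.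
case: (G x) => P Q /=.
rewrite antiderivB antideriv_deriv // -map_poly_d_antideriv.
rewrite hornerD hornerN hornerD hornerN hornerC horner1_d.
by rewrite -[P.[1] - _ - _]addrA -opprD addrC addNKr.
Qed.

Lemma tau_unit_cohom_inj k x : cocycle k x ->
  (exists y, y \in deg (k - 1) /\ I (x - d y)) -> coboundary k x.
Proof.
move=> [hx dx] [y [hy hxy]].
have ex := homotopy_formula x; rewrite dx /htpy cdga_hom0 /= antideriv0 horner0 addr0 in ex.
have hr : ev0 x = d (ev0 y).
  by apply/eqP; rewrite -subr_eq0 -ev0_d -ev0N -ev0D ev0_tau_ideal.
exists (ev0 y + htpy x); split; first by rewrite degD ?ev0_deg ?htpy_deg.
by rewrite {1}ex hr dD.
Qed.

Lemma tau_unit_cohom_surj k x : x \in deg k -> I (d x) ->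
  exists x' y, cocycle k x' /\ y \in deg (k - 1) /\ I (x - x' - d y).
Proof.
move=> hx hdx; exists (ev0 x), (htpy x); split.
  by split; [exact: ev0_deg | rewrite -ev0_d ev0_tau_ideal].
split; first exact: htpy_deg.
have -> : x - ev0 x - d (htpy x) = htpy (d x).
  rewrite {1}(homotopy_formula x) -[_ - ev0 x - _]addrA -opprD.
  by rewrite [ev0 x + _ + _]addrC addrK.
exact: tau_ideal_htpy.
Qed.

Lemma tau_unit_quasi_iso_of_section : tau_unit_quasi_iso A.
Proof.
by move=> k; split; [exact: tau_unit_cohom_inj | exact: tau_unit_cohom_surj].
Qed.

End SectionOfEvaluation.

Section DComplement.
Variables (K : fieldType) (A : cdga K).
Local Notation R := (cd_car A).
Local Notation deg := (@cd_deg _ A).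
Local Notation d := (@cd_d _ A).
Local Open Scope classical_set_scope.

Definition d0_transversal (V : set R) : Prop :=
  [/\ (forall v, V v -> v \in deg 1),
      (forall (a : K) x y, V x -> V y -> V (a *: x + y)) &
      (forall v a0, V v -> a0 \in deg 0 -> v = d a0 -> v = 0)].

Lemma d0_transversal_bigcup (F : set (set R)) :
  F `<=` d0_transversal -> total_on F subset ->
  d0_transversal (\bigcup_(V in F) V).
Proof.
move=> FP Ftot; split.
- by move=> v [V FV Vv]; case: (FP V FV) => H _ _; apply: H.
- move=> a x y [X FX Xx] [Y FY Yy].
  have [XY|YX] := Ftot X Y FX FY.
    by exists Y => //; case: (FP Y FY) => _ H _; apply: H => //; exact: XY.
  by exists X => //; case: (FP X FX) => _ H _; apply: H => //; exact: YX.
- by move=> v a0 [V FV Vv]; case: (FP V FV) => _ _ H; apply: H.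
Qed.

Lemma d0_transversal_extend (V : set R) (a : R) : d0_transversal V -> a \in deg 1 ->
  (forall w a0, V w -> a0 \in deg 0 -> a <> w + d a0) ->
  d0_transversal (fun z => exists w (c : K), V w /\ z = w + c *: a).
Proof.
move=> [V1 V2 V3] ha hna; split.
- by move=> v [w [c [Vw ->]]]; apply: degD; [exact: V1 | exact: degZ].
- move=> b x y [w1 [c1 [Vw1 ->]]] [w2 [c2 [Vw2 ->]]].
  exists (b *: w1 + w2), (b * c1 + c2); split; first exact: V2.
  by rewrite scalerDr addrACA scalerDl scalerA.
- move=> v a0 [w [c [Vw ->]]] ha0 E.
  have [c0|cn0] := eqVneq c 0.
    by move: E; rewrite c0 scale0r addr0 => E; rewrite (V3 w a0 Vw ha0 E).
  exfalso; apply: (hna ((- c^-1) *: w) (c^-1 *: a0)).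
  + by rewrite -[- c^-1](subrK 1) scalerDl scale1r; apply: V2.
  + exact: degZ.
  + rewrite dZ -E scalerDr scalerA mulVf // scale1r scaleNr.
    by rewrite addrA [- _ + _]addrC subrr add0r.
Qed.

(** By Zorn's lemma, a maximal subspace of [A^1] meeting [d(A^0)] trivially
    is a complement of [d(A^0)]. *)
Lemma d0_complement_exists : exists W : set R,
  [/\ (forall w, W w -> w \in deg 1),
      (forall (a : K) x y, W x -> W y -> W (a *: x + y)),
      W 0,
      (forall w a0, W w -> a0 \in deg 0 -> w = d a0 -> w = 0) &
      (forall a, a \in deg 1 -> exists w a0, [/\ W w, a0 \in deg 0 & a = w + d a0])].
Proof.
have [V [VT Vmax]] := Zorn_bigcup d0_transversal_bigcup; have [V1 V2 V3] := VT.
have V0 : V 0.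
  apply: contrapT => nV0; apply: (Vmax (fun z => z = 0)).
    split=> [x Vx|]; last by move=> /(_ 0 erefl).
    by exfalso; apply: nV0; rewrite -(subrr x) addrC -scaleN1r; apply: V2.
  split; [by move=> v ->; exact: deg0 | by move=> a x y -> ->; rewrite scaler0 addr0 |].
  by move=> v a0 ->.
exists V; split => // a ha; apply: contrapT => hna.
have hna' w a0 : V w -> a0 \in deg 0 -> a <> w + d a0.
  by move=> Vw ha0 E; apply: hna; exists w, a0.
apply: (Vmax _ _ (d0_transversal_extend VT ha hna')).
split; first by move=> x Vx; exists x, 0; rewrite scale0r addr0.
move=> BV; have Va : V a by apply: BV; exists 0, 1; rewrite scale1r add0r.
by apply: (hna' a 0 Va (deg0 A 0)); rewrite d0 addr0.
Qed.

End DComplement.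

Section Truncation.
Variables (K : fieldType) (A : cdga K).
Local Notation R := (cd_car A).
Local Notation deg := (@cd_deg _ A).
Local Notation d := (@cd_d _ A).
Local Notation hcomp := (@hcomp _ A).

Variable W : set R.
Hypothesis W_deg : forall w, W w -> w \in deg 1.
Hypothesis W_lin : forall (a : K) x y, W x -> W y -> W (a *: x + y).
Hypothesis W0 : W 0.
Hypothesis W_meet : forall w a0, W w -> a0 \in deg 0 -> w = d a0 -> w = 0.
Hypothesis W_span :
  forall a, a \in deg 1 -> exists w a0, [/\ W w, a0 \in deg 0 & a = w + d a0].

Let WZ (a : K) x : W x -> W (a *: x).
Proof. by move=> h; rewrite -[a *: x]addr0; apply: W_lin. Qed.

Let WD x y : W x -> W y -> W (x + y).
Proof. by move=> hx hy; rewrite -[x]scale1r; apply: W_lin. Qed.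

Definition truncated (x : R) : Prop :=
  [/\ forall k, k < 0 -> hcomp k x = 0, exists c : K, hcomp 0 x = c *: 1 & W (hcomp 1 x)].

Definition trunc_pred : pred R := fun x => `[< truncated x >].

Lemma truncP x : reflect (truncated x) (x \in trunc_pred).
Proof. by rewrite unfold_in; apply: asboolP. Qed.

Lemma truncated_hom m a : a \in deg m -> (m < 0 -> a = 0) ->
  (m = 0 -> exists c : K, a = c *: 1) -> (m = 1 -> W a) -> truncated a.
Proof.
move=> ha h1 h2 h3; split.
- by move=> k hk; rewrite (hcomp_hom _ ha); case: eqP => // e; apply: h1; rewrite -e.
- by rewrite (hcomp_hom _ ha); case: eqP => [/esym/h2 //|_]; exists 0; rewrite scale0r.
- by rewrite (hcomp_hom _ ha); case: eqP => [/esym/h3 //|_].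
Qed.

Lemma trunc0 : 0 \in trunc_pred.
Proof.
by apply/truncP; apply: (@truncated_hom 0) => //; [exact: deg0 | exists 0; rewrite scale0r].
Qed.

Lemma trunc1 : 1 \in trunc_pred.
Proof.
by apply/truncP; apply: (@truncated_hom 0) => //; [exact: deg1 | exists 1; rewrite scale1r].
Qed.

Lemma truncZD a x y : x \in trunc_pred -> y \in trunc_pred -> a *: x + y \in trunc_pred.
Proof.
move=> /truncP [hx1 [cx hx0] hx2] /truncP [hy1 [cy hy0] hy2]; apply/truncP; split.
- by move=> k hk; rewrite hcompZD hx1 // hy1 // scaler0 addr0.
- by exists (a * cx + cy); rewrite hcompZD hx0 hy0 scalerDl scalerA.
- by rewrite hcompZD; apply: W_lin.
Qed.

Lemma truncM x y : x \in trunc_pred -> y \in trunc_pred -> x * y \in trunc_pred.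
Proof.
move=> /truncP [hx1 [cx hx0] hx2] /truncP [hy1 [cy hy0] hy2]; apply/truncP.
have vanish i j : (i < 0) || (j < 0) -> hcomp i x * hcomp j y = 0.
  by case/orP => [/hx1 -> | /hy1 ->]; rewrite ?mul0r ?mulr0.
split.
- move=> k hk; apply: (@hcompM_closed _ _ (eq^~ 0)) => [||i j ij].
  + by [].
  + by move=> a b -> ->; rewrite addr0.
  + by rewrite vanish //; lia.
- apply: (@hcompM_closed _ _ (fun z => exists c : K, z = c *: 1)) => [||i j ij].
  + by exists 0; rewrite scale0r.
  + by move=> _ _ [c1 ->] [c2 ->]; exists (c1 + c2); rewrite scalerDl.
  + have [neg|] := boolP ((i < 0) || (j < 0)); first by exists 0; rewrite vanish ?scale0r.
    rewrite negb_or -!leNgt => /andP [i0 j0].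
    have [-> ->] : i = 0 /\ j = 0 by lia.
    by exists (cx * cy); rewrite hx0 hy0 -scalerAl mul1r scalerA.
- apply: (@hcompM_closed _ _ W) => [||i j ij]; [exact: W0 | exact: WD |].
  have [neg|] := boolP ((i < 0) || (j < 0)); first by rewrite vanish.
  rewrite negb_or -!leNgt => /andP [i0 j0].
  have [[-> ->]|[-> ->]] : (i = 0 /\ j = 1) \/ (i = 1 /\ j = 0) by lia.
    by rewrite hx0 -scalerAl mul1r; apply: WZ.
  by rewrite hy0 -scalerAr mulr1; apply: WZ.
Qed.

Lemma trunc_d x : x \in trunc_pred -> d x \in trunc_pred.
Proof.
move=> /truncP [hx1 [cx hx0] hx2]; apply/truncP; split.
- by move=> k hk; rewrite hcomp_d hx1 ?d0 //; lia.
- by exists 0; rewrite hcomp_d hx1 ?d0 ?scale0r.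
- by rewrite hcomp_d subrr hx0 dZ d1 scaler0.
Qed.

Lemma trunc_hcomp k x : x \in trunc_pred -> hcomp k x \in trunc_pred.
Proof.
move=> /truncP [hx1 [cx hx0] hx2]; apply/truncP; split.
- by move=> j hj; rewrite hcomp_id; case: eqP => // <-; exact: hx1.
- by rewrite hcomp_id; case: eqP => [<-|_]; [exists cx | exists 0; rewrite scale0r].
- by rewrite hcomp_id; case: eqP => [<-|_].
Qed.

Definition truncation : subcdga A :=
  SubCdga trunc0 trunc1 truncZD truncM trunc_d trunc_hcomp.

Lemma truncation_neg k s : k < 0 -> s \in truncation -> s \in deg k -> s = 0.
Proof. by move=> hk /truncP [h1 _ _] hs; rewrite -(h1 k hk) hcomp_hom_id. Qed.

Lemma truncation_deg_ge2 m a : 2 <= m -> a \in deg m -> a \in truncation.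
Proof. by move=> hm ha; apply/truncP; apply: (truncated_hom ha) => e; lia. Qed.

Lemma truncation_W w : W w -> w \in truncation.
Proof. by move=> hw; apply/truncP; apply: (truncated_hom (W_deg hw)) => // e; lia. Qed.

Hypothesis H_neg : forall k : int, k < 0 -> cohom_vanishes A k.
Hypothesis H0_ground : H0_is_ground A.

Lemma truncation_cohom_inj k s : s \in truncation -> cocycle k s -> coboundary k s ->
  exists s', [/\ s' \in truncation, s' \in deg (k - 1) & s = d s'].
Proof.
move=> sS [hs ds] [a [ha e]]; subst s.
have zero : d a = 0 -> exists s', [/\ s' \in truncation, s' \in deg (k - 1) & d a = d s'].
  by move=> ->; exists 0; rewrite d0 deg0 sub0.
have : k < 0 \/ k = 0 \/ k = 1 \/ k = 2 \/ 3 <= k by lia.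
case=> [hk|[hk|[hk|[hk|hk]]]]; try subst k.
- exact/zero/(truncation_neg hk sS hs).
- apply: zero; move/truncP: sS => [_ [c hc] _].
  rewrite hcomp_hom_id // in hc.
  have c0 : c = 0 by apply: H0_ground.1; exists a; rewrite -hc.
  by rewrite hc c0 scale0r.
- apply: zero; move/truncP: sS => [_ _]; rewrite hcomp_hom_id // => hW.
  exact: W_meet hW ha erefl.
- have [w [a0 [hw ha0 ->]]] := W_span ha.
  by exists w; rewrite truncation_W ?W_deg // dD dd addr0.
- by exists a; rewrite (@truncation_deg_ge2 (k - 1)) //; lia.
Qed.

Lemma truncation_cohom_surj k z : cocycle k z -> exists s a,
  [/\ s \in truncation, cocycle k s, a \in deg (k - 1) & z = s + d a].
Proof.
move=> [hz dz].
have : k < 0 \/ k = 0 \/ k = 1 \/ 2 <= k by lia.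
case=> [hk|[hk|[hk|hk]]]; try subst k.
- have [a [ha ->]] := H_neg hk (conj hz dz).
  exists 0, a; rewrite add0r; split=> //; first exact: sub0.
  by split; [exact: deg0 | exact: d0].
- have [c [y [hy ->]]] := H0_ground.2 z (conj hz dz).
  have hc : c *: 1 \in deg 0 by exact: degZ (deg1 A).
  exists (c *: 1), y; split => //; last by split; rewrite // dZ d1 scaler0.
  by apply/truncP; apply: (truncated_hom hc) => //; exists c.
- have [w [a0 [hw ha0 e]]] := W_span hz.
  exists w, a0; split; rewrite ?truncation_W //; split; first exact: W_deg.
  by have := congr1 d e; rewrite dz dD dd addr0.
- by exists z, 0; rewrite d0 addr0 (truncation_deg_ge2 hk hz) deg0.
Qed.

Lemma truncation_quasi_iso : sub_quasi_iso truncation.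
Proof. by split; [exact: truncation_cohom_inj | exact: truncation_cohom_surj]. Qed.

End Truncation.

Theorem propositionA4 (K : fieldType) (charK0 : [pchar K] =i pred0)
  (A : cdga K) :
  cofibrant A ->
  (exists eps : cd_car A -> K, augmentation eps) ->
  (forall k : int, k < 0 -> cohom_vanishes A k) ->
  H0_is_ground A ->
  tau_unit_quasi_iso A.
Proof.
move=> cofA _ H_neg H0_ground.
have [W [W_deg W_lin W0 W_meet W_span]] := d0_complement_exists A.
pose S := truncation W_lin W0.
have S_qi : sub_quasi_iso S by apply: truncation_quasi_iso.
have [g g_section] := cofA _ _ (ev1_hom S) (CDGAHom (id_cdga_hom_axiom A))
  (ev1_fibration S) (ev1_quasi_iso charK0 S_qi).
apply: (tau_unit_quasi_iso_of_section charK0 _ g_section).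
exact: truncation_neg.
Qed.
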